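(* Let $G=(V,E)$ be an undirected graph with distinct vertices $s,d$, with one Boolean variable $X_e$ per edge $e\in E$. Let $\mathcal{P}$ be a PSDD normalized for a right-linear vtree whose underlying Boolean function has as models exactly the edge-indicator assignments of simple paths from $s$ to $d$ in $G$, parameterized so that every such simple path has positive probability. When a path is sampled top-down from $\mathcal{P}$ (at each reached decision node select an element $(p_i,s_i)$ with probability $\theta_i$, take the prime $p_i$, and recurse into $s_i$), no prime encountered is the constant $\top$; i.e., every encountered prime is a literal $X_e$ or $\neg X_e$.
   Context: A vtree over a set of Boolean variables is a full binary tree whose leaves are in bijection with the variables; it is right-linear if the left child of every internal node is a leaf. An SDD has terminal nodes (a literal, $\top$ or $\bot$) and decision nodes $\{(p_1,s_1),\dots,(p_n,s_n)\}$ representing $\bigvee_i(p_i\wedge s_i)$ with primes consistent, mutually exclusive and exhaustive; a node is normalized for a vtree node $v$ if terminals sit at leaves containing their variable, and decision nodes have primes normalized for the left child and subs for the right child of $v$, the root being normalized for the vtree root. A PSDD attaches to each decision node parameters $\theta_i\ge0$ summing to $1$ with $\theta_i=0$ iff $s_i=\bot$, and to each $\top$ terminal a parameter in $(0,1)$. *)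

From HB Require Import structures.
From mathcomp Require Import all_boot all_order all_algebra.
From Stdlib Require List.
Set Implicit Arguments. Unset Strict Implicit. Unset Printing Implicit Defensive.
Import Order.TTheory GRing.Theory Num.Theory.
Local Open Scope ring_scope.

(* A graph on vertex type V with edge type Ed; [ends e] is the set of the two
   endpoints of edge e.  Simplicity (no loops, no parallel edges) is imposed as
   hypotheses in the theorem. *)
Section Graph.
Variables (V Ed : finType) (ends : Ed -> {set V}).

Definition adjacent (x y : V) : bool := [exists e, ends e == [set x; y]].

Definition simple_path (s d : V) (p : seq V) : bool :=
  [&& uniq (s :: p), last s p == d
    & all (fun xy => adjacent xy.1 xy.2) (zip (s :: p) p)].

Definition path_edges (s : V) (p : seq V) : {set Ed} :=
  [set e | has (fun xy => ends e == [set xy.1; xy.2]) (zip (s :: p) p)].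

Definition is_path_indicator (s d : V) (a : Ed -> bool) : Prop :=
  exists p : seq V, simple_path s d p /\ forall e, a e = (e \in path_edges s p).
End Graph.

Inductive vtree (X : Type) : Type :=
| VLeaf of X
| VNode of vtree X & vtree X.
Arguments VLeaf {X}. Arguments VNode {X}.

Fixpoint vleaves (X : Type) (v : vtree X) : seq X :=
  match v with VLeaf x => [:: x] | VNode l r => vleaves l ++ vleaves r end.

Fixpoint right_linear (X : Type) (v : vtree X) : bool :=
  match v with
  | VLeaf _ => true
  | VNode l r => (if l is VLeaf _ then true else false) && right_linear r
  end.

Definition vtree_over (X : finType) (v : vtree X) : bool :=
  uniq (vleaves v) && all (fun x => x \in vleaves v) (enum X).

(* ---------- (P)SDDs, as trees (sharing unfolded) ---------- *)
(* PLit x b : literal X (b = true) or ~X (b = false);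
   PTop x th : the constant T sitting at the leaf of variable x, with parameter th;
   PBot : the constant _|_ ;
   PDec es : decision node, elements (prime, sub, theta). *)
Inductive psdd (X R : Type) : Type :=
| PLit of X & bool
| PTop of X & R
| PBot
| PDec of seq (psdd X R * psdd X R * R).
Arguments PLit {X R}. Arguments PTop {X R}. Arguments PBot {X R}. Arguments PDec {X R}.

Fixpoint peval (X : eqType) (R : Type) (a : X -> bool) (n : psdd X R) {struct n} : bool :=
  match n with
  | PLit x b => a x == b
  | PTop _ _ => true
  | PBot => false
  | PDec es =>
      (fix ev (l : seq (psdd X R * psdd X R * R)) : bool :=
         match l with
         | [::] => false
         | (p, s, _) :: l' => (peval a p && peval a s) || ev l'
         end) es
  end.

Fixpoint pprob (X : eqType) (R : pzRingType) (a : X -> bool) (n : psdd X R) {struct n} : R :=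
  match n with
  | PLit x b => if a x == b then 1 else 0
  | PTop x th => if a x then th else 1 - th
  | PBot => 0
  | PDec es =>
      (fix pr (l : seq (psdd X R * psdd X R * R)) : R :=
         match l with
         | [::] => 0
         | (p, s, th) :: l' => th * pprob a p * pprob a s + pr l'
         end) es
  end.

Definition dec_ok (X : eqType) (R : numDomainType)
    (es : seq (psdd X R * psdd X R * R)) : Prop :=
  [/\ (forall t, List.In t es -> exists a : X -> bool, peval a t.1.1),
      (forall i j, (i < size es)%N -> (j < size es)%N -> i <> j ->
         forall a : X -> bool,
           ~~ (peval a (nth (PBot, PBot, 0) es i).1.1
               && peval a (nth (PBot, PBot, 0) es j).1.1))
    & (forall a : X -> bool, exists2 t, List.In t es & peval a t.1.1)] /\
  [/\ (forall t, List.In t es -> 0 <= t.2),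
      \sum_(t <- es) t.2 = 1
    & (forall t, List.In t es -> (t.2 = 0 <-> t.1.2 = PBot))].

Inductive psdd_ok (X : eqType) (R : numDomainType) : vtree X -> psdd X R -> Prop :=
| ok_lit x b : psdd_ok (VLeaf x) (PLit x b)
| ok_top x th : 0 < th -> th < 1 -> psdd_ok (VLeaf x) (PTop x th)
| ok_bot v : psdd_ok v PBot
| ok_dec l r es :
    (forall t, List.In t es -> psdd_ok l t.1.1 /\ psdd_ok r t.1.2) ->
    dec_ok es -> psdd_ok (VNode l r) (PDec es).

(* nodes reached with positive probability by top-down sampling from root *)
Inductive reached (X R : Type) (lt0 : R -> Prop) (root : psdd X R) : psdd X R -> Prop :=
| reached_root : reached lt0 root root
| reached_step es p s th :
    reached lt0 root (PDec es) -> List.In (p, s, th) es -> lt0 th -> reached lt0 root s.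

Definition sreached (X : Type) (R : numDomainType) (root n : psdd X R) : Prop :=
  reached (fun th : R => 0 < th) root n.

From HB Require Import structures.
From mathcomp Require Import all_boot all_order all_algebra.
Import Order.TTheory GRing.Theory Num.Theory.
Local Open Scope ring_scope.

(* Let a decision node N be reached with positive probability and let one of its
   elements (p, s, θ) with θ > 0 be selected.  Sampling only descends into subs,
   so N is normalized for a node on the right spine of the vtree, whose left child
   is a leaf X_e when the vtree is right-linear; hence p is a literal of X_e, ⊤ or
   ⊥.  It is not ⊥, since primes are consistent.  If it were ⊤, a model of s
   (which exists, as θ > 0 forces s <> ⊥) would extend to a model of N with X_e
   set either way, and, since the models of a reached node extend to models of
   the root by a fixed assignment outside its vtree node, P would have two models
   differing only at X_e.  These would be the edge sets of two simple s-d paths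
   differing in one edge, which is impossible: in a simple s-d path exactly s and
   d have odd degree, and toggling an edge changes the degree parity at its ends. *)

Definition glue {X : eqType} (A : seq X) (a b : X -> bool) : X -> bool :=
  fun y => if y \in A then a y else b y.

Lemma glue_glue_sub {X : eqType} {A B : seq X} (a b c : X -> bool) :
  {subset B <= A} -> glue A (glue B a b) c =1 glue B a (glue A b c).
Proof. by move=> BA y; rewrite /glue; case: (boolP (y \in B)) => [/BA ->|]. Qed.

Lemma mem_zip_pair (T U : eqType) (s : seq T) (t : seq U) y z :
  (y, z) \in zip s t -> y \in s /\ z \in t.
Proof.
elim: s t => [|a s IH] [|b t] //=.
rewrite !in_cons => /orP[/eqP[-> ->]|/IH[ys zt]]; first by rewrite !eqxx.
by rewrite ys zt !orbT.
Qed.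

Section PathParity.
Context {V Ed : finType} {ends : Ed -> {set V}}.
Hypothesis ends_inj : injective ends.

Definition degree (A : {set Ed}) (w : V) : nat := (\sum_(e in A) (w \in ends e))%N.

Lemma path_edges_ends s p e :
  e \in path_edges ends s p -> {subset ends e <= s :: p}.
Proof.
rewrite inE => /hasP[[y z] /mem_zip_pair[ys zp] /eqP -> /=] w.
by rewrite !inE => /orP[/eqP -> //|/eqP ->]; rewrite zp orbT.
Qed.

Lemma path_edges_cons {s x} p {e0} : ends e0 = [set s; x] ->
  path_edges ends s (x :: p) = e0 |: path_edges ends x p.
Proof.
move=> ends_e0; apply/setP => e; rewrite !inE /=; congr (_ || _).
by rewrite -ends_e0 (inj_eq ends_inj).
Qed.

Lemma simple_path_degree_odd {s d p} w : simple_path ends s d p ->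
  odd (degree (path_edges ends s p) w) = (w == s) (+) (w == d).
Proof.
elim: p s => [|x p IH] s.
  rewrite /simple_path /= andbT => /eqP <-.
  by rewrite /degree big1 ?addbb // => e; rewrite inE.
rewrite /simple_path /= => /and3P[/andP[s_notin uniq_xp] last_d /andP[adj_sx adj_p]].
have sp_x : simple_path ends x d p by apply/and3P.
have [e0 /eqP ends_e0] := existsP adj_sx.
have e0_new : e0 \notin path_edges ends x p.
  by apply: contra s_notin => /path_edges_ends; apply; rewrite ends_e0 !inE eqxx.
have s_neq_x : s != x by apply: contraNneq s_notin => ->; rewrite mem_head.
rewrite (path_edges_cons p ends_e0) /degree big_setU1 //= oddD oddb -/(degree _ w).
rewrite (IH _ sp_x) ends_e0 !inE.
case: (w =P s) => [->|_] /=; first by rewrite (negbTE s_neq_x).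
by case: (w == x); case: (w == d).
Qed.

(* Two simple s-d path indicators that agree off an edge x agree on x:
   otherwise the parity of the degree at an end of x would differ. *)
Lemma path_indicator_no_single_flip {s d} {a a' : Ed -> bool} {x} :
  (0 < #|ends x|)%N ->
  is_path_indicator ends s d a -> is_path_indicator ends s d a' ->
  (forall y, y != x -> a y = a' y) -> a x = a' x.
Proof.
move=> ends_x_gt0.
suff flip_up b b' : is_path_indicator ends s d b -> is_path_indicator ends s d b' ->
    (forall y, y != x -> b y = b' y) -> b x -> b' x.
  move=> Ha Ha' agree; apply/idP/idP; first exact: flip_up.
  by apply: flip_up => // y /agree.
move=> [p [sp Hp]] [p' [sp' Hp']] agree bx; apply/negPn/negP => b'x.
have [u ux] := card_gt0P ends_x_gt0.
have edges_p : path_edges ends s p = x |: path_edges ends s p'.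
  apply/setP => y; rewrite in_setU1 -Hp -Hp'.
  by case: (eqVneq y x) => [->|/agree]; [rewrite bx | move=> ->].
have x_new : x \notin path_edges ends s p' by rewrite -Hp'.
have := simple_path_degree_odd u sp; have := simple_path_degree_odd u sp'.
rewrite edges_p /degree big_setU1 //= ux oddD /= -/(degree _ u) => ->.
by case: (_ (+) _).
Qed.

Lemma path_indicator_no_free_edge {s d} (a : Ed -> bool) {x} :
  (0 < #|ends x|)%N ->
  ~ (forall v, is_path_indicator ends s d (glue [:: x] (fun=> v) a)).
Proof.
move=> ends_x_gt0 free_x.
have agree y : y != x -> glue [:: x] (fun=> true) a y = glue [:: x] (fun=> false) a y.
  by move=> ny; rewrite /glue mem_seq1 (negbTE ny).
have := path_indicator_no_single_flip ends_x_gt0 (free_x true) (free_x false) agree.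
by rewrite /glue mem_seq1 eqxx.
Qed.
End PathParity.

(* Elements of a sequence are listed with [List.In] because PSDDs lack a
   decidable equality; this bridges to the boolean [has]. *)
Lemma In_has {T : Type} {f : T -> bool} {t : T} {l : seq T} :
  List.In t l -> f t -> has f l.
Proof. by elim: l => [|t' l IH] //= [-> ->|/IH ft_l /ft_l ->]; rewrite ?orbT. Qed.

Lemma sum_neq0_In (M : nmodType) (T : Type) (f : T -> M) (l : seq T) :
  \sum_(t <- l) f t != 0 -> exists2 t, List.In t l & f t != 0.
Proof.
elim: l => [|t l IH]; first by rewrite big_nil eqxx.
rewrite big_cons; have [->|nz] := eqVneq (f t) 0; last by exists t => //; left.
by rewrite add0r => /IH[t' t'_in nz']; exists t' => //; right.
Qed.

Section PsddSemantics.
Context {R : numDomainType} {X : eqType}.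
Implicit Types (a b c : X -> bool) (w : vtree X) (n : psdd X R)
  (es : seq (psdd X R * psdd X R * R)).

Definition free_in n x a : Prop := forall v : bool, peval (glue [:: x] (fun=> v) a) n.

Lemma peval_PDec a es :
  peval a (PDec es) = has (fun t => peval a t.1.1 && peval a t.1.2) es.
Proof. by elim: es => [|[[p s] th] es IH] //=; rewrite -IH. Qed.

Lemma psdd_ok_PDecP {w es} : psdd_ok w (PDec es) ->
  exists l r, [/\ w = VNode l r,
    forall t, List.In t es -> psdd_ok l t.1.1 /\ psdd_ok r t.1.2 & dec_ok es].
Proof. by inversion 1; exists l, r. Qed.

Lemma psdd_ok_VLeafP {x n} : psdd_ok (VLeaf x) n ->
  [\/ exists v : bool, n = PLit x v, exists th, n = PTop x th | n = PBot].
Proof. by inversion 1; [apply: Or31; eexists | apply: Or32; eexists | apply: Or33]. Qed.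

Lemma dec_ok_consistent {es t} : dec_ok es -> List.In t es -> exists a, peval a t.1.1.
Proof. by move=> [[consistent _ _] _]; apply: consistent. Qed.

Lemma dec_ok_sub_nonbot {es t} : dec_ok es -> List.In t es -> t.2 != 0 -> t.1.2 <> PBot.
Proof. by move=> [_ [_ _ zero_iff]] t_in /eqP nz /(proj2 (zero_iff t t_in)). Qed.

(* Parameters sum to 1, so some element has a sub different from ⊥. *)
Lemma dec_ok_live {es} : dec_ok es -> exists2 t, List.In t es & t.1.2 <> PBot.
Proof.
move=> dec; have [_ [_ sum1 _]] := dec.
have [t t_in nz] : exists2 t, List.In t es & t.2 != 0.
  by apply: sum_neq0_In; rewrite sum1 oner_neq0.
by exists t => //; exact: dec_ok_sub_nonbot dec t_in nz.
Qed.

Lemma peval_local {w n a b} : psdd_ok w n -> {in vleaves w, a =1 b} ->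
  peval a n = peval b n.
Proof.
elim: w n => [x|l IHl r IHr] n ok_n ab;
  inversion ok_n as [x' v|x' th _ _|w'|l' r' es ok_es _]; subst => //=.
  by rewrite ab // mem_seq1.
have [ab_l ab_r] : {in vleaves l, a =1 b} /\ {in vleaves r, a =1 b}.
  by split=> y y_in; apply: ab; rewrite mem_cat y_in ?orbT.
change (peval a (PDec es) = peval b (PDec es)).
rewrite !peval_PDec; elim: es ok_es {ok_n} => [|t es IHes] ok_es //=.
have [ok_p ok_s] := ok_es t (or_introl erefl).
rewrite (IHl _ ok_p ab_l) (IHr _ ok_s ab_r) IHes // => t' t'_in.
by apply: ok_es; right.
Qed.

(* Since the variables of l and r are disjoint, a model of a prime (on l) and a
   model of its sub (on r) glue into a model of the decision node. *)
Lemma peval_PDec_glue {l r es t a b} :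
  psdd_ok (VNode l r) (PDec es) -> uniq (vleaves (VNode l r)) -> List.In t es ->
  peval a t.1.1 -> peval b t.1.2 -> peval (glue (vleaves l) a b) (PDec es).
Proof.
case/psdd_ok_PDecP=> _ [_ [[<- <-] ok_es _]].
rewrite cat_uniq => /and3P[_ /hasPn disj _] t_in pa sb.
have [ok_p ok_s] := ok_es t t_in.
rewrite peval_PDec; apply: (In_has t_in); apply/andP; split.
  by rewrite (peval_local ok_p (b:=a)) // => y /= y_l; rewrite /glue y_l.
by rewrite (peval_local ok_s (b:=b)) // => y /disj /negbTE y_l; rewrite /glue y_l.
Qed.

Lemma psdd_sat {w n} : psdd_ok w n -> uniq (vleaves w) -> n <> PBot ->
  exists a, peval a n.
Proof.
elim: w n => [x|l IHl r IHr] n ok_n uniq_w n_nonbot.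
  case/psdd_ok_VLeafP: ok_n n_nonbot => [[v ->]|[th ->]|->] // _.
    by exists (fun=> v); rewrite /= eqxx.
  by exists (fun=> true).
case: n ok_n n_nonbot => [x v|x th||es] ok_n n_nonbot; try by inversion ok_n.
have [_ [_ [[<- <-] ok_es dec]]] := psdd_ok_PDecP ok_n.
have [t t_in s_nonbot] := dec_ok_live dec.
have [a pa] := dec_ok_consistent dec t_in.
move: (uniq_w); rewrite /= cat_uniq => /and3P[_ _ uniq_r].
have [b sb] := IHr _ (proj2 (ok_es t t_in)) uniq_r s_nonbot.
by exists (glue (vleaves l) a b); apply: peval_PDec_glue ok_n uniq_w t_in pa sb.
Qed.

Lemma sreached_context {vt P n} : psdd_ok vt P -> uniq (vleaves vt) -> sreached P n ->
  exists w c, [/\ psdd_ok w n, uniq (vleaves w), right_linear vt -> right_linear w &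
    forall b, peval b n -> peval (glue (vleaves w) b c) P].
Proof.
move=> ok_P uniq_vt; elim=> [|es p s th _ [w [c [ok_w uniq_w rl_w ext_w]]] t_in _].
  exists vt, (fun=> true); split=> // b Pb.
  by rewrite (peval_local ok_P (b:=b)) // => y y_vt; rewrite /glue y_vt.
have [l [r [def_w ok_es dec]]] := psdd_ok_PDecP ok_w; subst w.
have [a pa] := dec_ok_consistent dec t_in.
move: (uniq_w); rewrite cat_uniq => /and3P[_ /hasPn disj uniq_r].
exists r, (glue (vleaves l) a c); split => //.
- exact: (proj2 (ok_es _ t_in)).
- by move=> /rl_w /andP[].
move=> b sb; have := ext_w _ (peval_PDec_glue ok_w uniq_w t_in pa sb).
rewrite (peval_local ok_P (b:=glue (vleaves r) b (glue (vleaves l) a c))) //.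
move=> y _; rewrite /glue mem_cat.
case: (boolP (y \in vleaves r)) => [/disj/negbTE -> //|_].
by rewrite orbF; case: (y \in vleaves l).
Qed.

Lemma top_prime_free {x r es th' s th} :
  psdd_ok (VNode (VLeaf x) r) (PDec es) -> uniq (vleaves (VNode (VLeaf x) r)) ->
  List.In (PTop x th', s, th) es -> s <> PBot ->
  exists b, free_in (PDec es) x b.
Proof.
move=> ok_n uniq_w t_in s_nonbot.
have [_ [_ [[<- <-] ok_es _]]] := psdd_ok_PDecP ok_n.
move: (uniq_w); rewrite cat_uniq => /and3P[_ _ uniq_r].
have [b sb] := psdd_sat (proj2 (ok_es _ t_in)) uniq_r s_nonbot.
by exists b => v; apply: (peval_PDec_glue ok_n uniq_w t_in (a:=fun=> v)).
Qed.

Lemma reached_prime_cases {vt P es p s th} :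
  psdd_ok vt P -> uniq (vleaves vt) -> right_linear vt ->
  sreached P (PDec es) -> List.In (p, s, th) es -> 0 < th ->
  (exists x v, p = PLit x v) \/ exists x a, free_in P x a.
Proof.
move=> ok_P uniq_vt rl_vt reach t_in th_gt0.
have [w [c [ok_w uniq_w /(_ rl_vt) rl_w ext_w]]] := sreached_context ok_P uniq_vt reach.
have [l [r [def_w ok_es dec]]] := psdd_ok_PDecP ok_w; subst w.
case: l rl_w ok_w ok_es uniq_w ext_w => [x _|//] ok_w ok_es uniq_w ext_w.
have s_nonbot : s <> PBot by apply: (dec_ok_sub_nonbot dec t_in); exact: lt0r_neq0.
have ok_p : psdd_ok (VLeaf x) p := proj1 (ok_es _ t_in).
case/psdd_ok_VLeafP: ok_p => [[v ->]|[th' def_p]|p_bot].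
- by left; exists x, v.
- right; subst p; have [b free_b] := top_prime_free ok_w uniq_w t_in s_nonbot.
  have x_w : {subset [:: x] <= vleaves (VNode (VLeaf x) r)}.
    by move=> z; rewrite mem_seq1 => /eqP ->; rewrite mem_head.
  exists x, (glue (vleaves (VNode (VLeaf x) r)) b c) => v.
  rewrite -(peval_local ok_P (fun y _ => glue_glue_sub (fun=> v) b c x_w y)).
  exact: ext_w.
- by have [a] := dec_ok_consistent dec t_in; rewrite p_bot.
Qed.

End PsddSemantics.

Theorem mainTheorem2 (R : realFieldType) (V Ed : finType) (ends : Ed -> {set V})
    (s d : V) (vt : vtree Ed) (P : psdd Ed R) :
  (forall e, #|ends e| = 2%N) -> injective ends -> s != d ->
  right_linear vt -> vtree_over vt -> psdd_ok vt P ->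
  (forall a : Ed -> bool, peval a P <-> is_path_indicator ends s d a) ->
  (forall a : Ed -> bool, is_path_indicator ends s d a -> 0 < pprob a P) ->
  forall (es : seq (psdd Ed R * psdd Ed R * R)) (p sb : psdd Ed R) (th : R),
    sreached P (PDec es) -> List.In (p, sb, th) es -> 0 < th ->
    exists (e : Ed) (b : bool), p = PLit e b.
Proof.
move=> ends2 ends_inj _ rl_vt /andP[uniq_vt _] ok_P P_paths _ es p sb th reach t_in th_gt0.
have [//|[x [a free_x]]] := reached_prime_cases ok_P uniq_vt rl_vt reach t_in th_gt0.
case: (path_indicator_no_free_edge ends_inj a (x:=x) (s:=s) (d:=d)).
  by rewrite ends2.
by move=> v; apply/P_paths/free_x.
Qed.
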